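(* Let $V$ be a finite-dimensional $S_{n+1}$-invariant subspace of the space of $k$-forms on $T^n$, and let $W_d$ ($0\le d\le n$) be $S_{n+1}$-invariant subspaces with $V_d=W_d\oplus V_{d+1}$. Then the geometric decomposition map $\mathcal D:V\to\bigoplus_{d=0}^n\bigoplus_{\dim F=d}\mathring V(F)$ is $S_{n+1}$-equivariant.
   Context: $T^n\subset\mathbb R^{n+1}$ is the standard simplex $\{\lambda_i\ge0,\ \sum\lambda_i=1\}$. For $\pi\in S_{n+1}$ (permutations of $\{0,\dots,n\}$), $S_\pi(\lambda_0,\dots,\lambda_n)=(\lambda_{\pi(0)},\dots,\lambda_{\pi(n)})$, and $\pi$ acts on forms by pullback $S_\pi^*$. For a face $F$, $V(F)=\mathrm{tr}_{T^n,F}(V)$ (pullback to $F$), and $\mathring V(F)$ is the subspace of $V(F)$ with vanishing trace on $\partial F$. $V_d$ is the subspace of $V$ of forms whose traces vanish on all $(d-1)$-dimensional faces of $T^n$ ($V_0=V$, $V_{n+1}=0$). $\mathcal D$ is defined on $W_d$ by $\alpha\mapsto\bigoplus_{\dim F=d}\mathrm{tr}_{T^n,F}\alpha$ and extended linearly. The action of $S_{n+1}$ on $\bigoplus_{\dim F=d}\mathring V(F)$: if $F'=S_\pi(F)$, then pullback by $S_\pi|_F:F\to F'$ gives a map $S_\pi^*:\mathring V(F')\to\mathring V(F)$, and these maps together define the action of $\pi$ on the direct sum. *)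

From mathcomp Require Import all_boot all_order all_algebra all_fingroup.
From mathcomp Require Import reals.
Set Implicit Arguments. Unset Strict Implicit. Unset Printing Implicit Defensive.
Import Order.TTheory GRing.Theory Num.Theory.
Local Open Scope ring_scope.

Section Forms.
Variables (R : realType) (n k : nat).

(* Points / vectors of R^{n+1}, coordinates lambda_0..lambda_n. *)
Definition vec := 'I_n.+1 -> R.

(* A genuine k-kform
   on a face F is such a function which is multilinear and alternating on
   the tangent space of F; two raw forms represent the same kform on F iff
   they agree at points of F on tangent vectors of F (see [eqF]). *)
Definition kform := vec -> ('I_k -> vec) -> R.

(* A face of T^n is given by its (nonempty) vertex set F ⊆ {0..n};
   dim F = #|F| - 1. *)
Definition in_face (F : {set 'I_n.+1}) (x : vec) : Prop :=
  (forall i, 0 <= x i) /\ (\sum_i x i = 1) /\ (forall i, i \notin F -> x i = 0).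

Definition tangent (F : {set 'I_n.+1}) (v : vec) : Prop :=
  (\sum_i v i = 0) /\ (forall i, i \notin F -> v i = 0).

Definition fullface : {set 'I_n.+1} := setT.

(* tr_{T^n,F} w = tr_{T^n,F} u : equality of the pullbacks to F. *)
Definition eqF (F : {set 'I_n.+1}) (w u : kform) : Prop :=
  forall x vs, in_face F x -> (forall j, tangent F (vs j)) -> w x vs = u x vs.

Definition eqT (w u : kform) : Prop := eqF fullface w u.

Definition form0 : kform := fun _ _ => 0.
Definition form_add (w u : kform) : kform := fun x vs => w x vs + u x vs.
Definition form_scale (a : R) (w : kform) : kform := fun x vs => a * w x vs.
Definition form_sum (w : 'I_n.+1 -> kform) : kform :=
  fun x vs => \sum_(d < n.+1) w d x vs.

Definition vlin (a : R) (u w : vec) : vec := fun i => a * u i + w i.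
Definition upd (vs : 'I_k -> vec) (j : 'I_k) (u : vec) : 'I_k -> vec :=
  fun i => if i == j then u else vs i.

Definition is_form (w : kform) : Prop :=
  (forall x vs j a u u', in_face fullface x ->
     (forall i, tangent fullface (vs i)) -> tangent fullface u ->
     tangent fullface u' ->
     w x (upd vs j (vlin a u u')) = a * w x (upd vs j u) + w x (upd vs j u'))
  /\ (forall x vs i j, in_face fullface x ->
     (forall l, tangent fullface (vs l)) -> i != j -> vs i = vs j -> w x vs = 0).

(* Subspace of the space of k-forms on T^n (predicate on representatives,
   closed under equality of forms on T^n). *)
Definition kf_subspace (V : kform -> Prop) : Prop :=
  (forall w, V w -> is_form w) /\ V form0 /\
  (forall a w u, V w -> V u -> V (form_add (form_scale a w) u)) /\
  (forall w u, eqT w u -> V w -> V u).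

Definition kf_findim (V : kform -> Prop) : Prop :=
  exists (m : nat) (b : 'I_m -> kform), forall v, V v ->
    exists c : 'I_m -> R, eqT v (fun x vs => \sum_(i < m) c i * b i x vs).

Definition Spi (p : 'S_n.+1) (x : vec) : vec := fun i => x (p i).

Definition pull (p : 'S_n.+1) (w : kform) : kform :=
  fun x vs => w (Spi p x) (fun j => Spi p (vs j)).

Definition Sface (p : 'S_n.+1) (F : {set 'I_n.+1}) : {set 'I_n.+1} :=
  [set i | p i \in F].

Definition Sn_invariant (V : kform -> Prop) : Prop :=
  forall p w, V w -> V (pull p w).

Definition Vsub (V : kform -> Prop) (d : nat) (w : kform) : Prop :=
  V w /\ forall G : {set 'I_n.+1}, #|G| = d -> eqF G w form0.

Definition dsum_decomp (V : kform -> Prop) (W : nat -> kform -> Prop) (d : nat) : Prop :=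
  (forall w, W d w -> Vsub V d w) /\
  (forall w, W d w -> Vsub V d.+1 w -> eqT w form0) /\
  (forall v, Vsub V d v -> exists w u, W d w /\ Vsub V d.+1 u /\
     eqT v (form_add w u)).

Definition is_decomp (W : nat -> kform -> Prop) (v : kform) (w : 'I_n.+1 -> kform) : Prop :=
  (forall d : 'I_n.+1, W d (w d)) /\ eqT v (form_sum w).

Definition fdim (F : {set 'I_n.+1}) : 'I_n.+1 := inord (#|F|.-1).

(* D v, where v = sum_d w_d : component at face F is tr_F w_{dim F}
   (as an element of the direct sum, components compared via eqF F). *)
Definition Dfam (w : 'I_n.+1 -> kform) : {set 'I_n.+1} -> kform :=
  fun F => w (fdim F).

(* action of pi on the direct sum: component at F is S_pi^* of the
   component at F' = S_pi(F). *)
Definition act_fam (p : 'S_n.+1) (Phi : {set 'I_n.+1} -> kform) :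
  {set 'I_n.+1} -> kform := fun F => pull p (Phi (Sface p F)).

End Forms.

From mathcomp Require Import all_boot all_order all_algebra all_fingroup.
From mathcomp Require Import reals.
From mathcomp Require Import zify.
Set Implicit Arguments. Unset Strict Implicit. Unset Printing Implicit Defensive.
Import GRing.Theory.
Local Open Scope ring_scope.

(* Pulling back a decomposition v = sum_d w_d along S_pi gives a decomposition
   of S_pi^* v with the same spaces W_d, since these are S_(n+1)-invariant.
   Decompositions are unique: if sum_d z_d = 0 with z_d in W_d, then, going up
   in d, the z_j with j < d vanish already and the z_j with j > d vanish on
   faces with at most j vertices, so z_d vanishes on the faces with d + 1
   vertices, i.e. z_d lies in W_d and in V_(d+1), hence is 0.  Finally S_pi
   preserves the dimension of faces. *)

Section Faces.
Variables (R : realType) (n k : nat).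

Lemma in_face_subset (G H : {set 'I_n.+1}) (x : vec R n) :
  G \subset H -> in_face G x -> in_face H x.
Proof.
move=> sGH [x_ge0 [x_sum x_out]]; do 2!split=> //.
by move=> i iH; apply: x_out; apply: contra iH; apply: (subsetP sGH).
Qed.

Lemma tangent_subset (G H : {set 'I_n.+1}) (v : vec R n) :
  G \subset H -> tangent G v -> tangent H v.
Proof.
move=> sGH [v_sum v_out]; split=> // i iH.
by apply: v_out; apply: contra iH; apply: (subsetP sGH).
Qed.

Lemma eqF_subset (G H : {set 'I_n.+1}) (w u : kform R n k) :
  G \subset H -> eqF H w u -> eqF G w u.
Proof.
move=> sGH wu x vs Gx Gvs; apply: wu; first exact: in_face_subset Gx.
by move=> j; apply: tangent_subset (Gvs j).
Qed.

Lemma eqT_eqF (G : {set 'I_n.+1}) (w u : kform R n k) :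
  eqT w u -> eqF G w u.
Proof. exact/eqF_subset/subsetT. Qed.

Lemma eqF_card_le (w u : kform R n k) (d : nat) : (d <= n.+1)%N ->
  (forall G : {set 'I_n.+1}, #|G| = d -> eqF G w u) ->
  forall G : {set 'I_n.+1}, (#|G| <= d)%N -> eqF G w u.
Proof.
move=> le_d_n wu_d G; move def_m : (d - #|G|)%N => m.
elim: m G def_m => [|m IH] G def_m le_G_d; first by apply: wu_d; lia.
have /card_gt0P [y] : (0 < #|~: G|)%N.
  by have := cardsC G; rewrite card_ord; lia.
rewrite in_setC => yG; apply: (eqF_subset (subsetUr [set y] G)).
apply: IH; rewrite cardsU1 yG add1n; first by rewrite subnS def_m.
by rewrite -subn_gt0 def_m.
Qed.

Lemma eqF_sum_component (G : {set 'I_n.+1}) (z : 'I_n.+1 -> kform R n k)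
    (d : 'I_n.+1) :
  eqF G (form_sum z) (@form0 R n k) ->
  (forall j, j != d -> eqF G (z j) (@form0 R n k)) ->
  eqF G (z d) (@form0 R n k).
Proof.
move=> sum0 z0 x vs Gx Gvs; have := sum0 x vs Gx Gvs.
by rewrite /form_sum (bigD1 d) //= big1 ?addr0 // => j /z0; apply.
Qed.

End Faces.

Section Permutations.
Variables (R : realType) (n k : nat) (p : 'S_n.+1).

Lemma in_face_Spi (F : {set 'I_n.+1}) (x : vec R n) :
  in_face F x -> in_face (Sface p F) (Spi p x).
Proof.
move=> [x_ge0 [x_sum x_out]]; split; first by move=> i; apply: x_ge0.
split; last by move=> i; rewrite inE; apply: x_out.
by rewrite -[RHS]x_sum [RHS](reindex_inj (@perm_inj _ p)).
Qed.

Lemma tangent_Spi (F : {set 'I_n.+1}) (v : vec R n) :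
  tangent F v -> tangent (Sface p F) (Spi p v).
Proof.
move=> [v_sum v_out]; split; last by move=> i; rewrite inE; apply: v_out.
by rewrite -[RHS]v_sum [RHS](reindex_inj (@perm_inj _ p)).
Qed.

Lemma eqF_pull (F : {set 'I_n.+1}) (w u : kform R n k) :
  eqF (Sface p F) w u -> eqF F (pull p w) (pull p u).
Proof.
move=> wu x vs Fx Fvs; apply: wu; first exact: in_face_Spi.
by move=> j; apply: tangent_Spi.
Qed.

Lemma Sface_setT : Sface p (fullface n) = fullface n.
Proof. by apply/setP=> i; rewrite !inE. Qed.

Lemma eqT_pull (w u : kform R n k) : eqT w u -> eqT (pull p w) (pull p u).
Proof. by move=> wu; apply: eqF_pull; rewrite Sface_setT. Qed.

Lemma card_Sface (F : {set 'I_n.+1}) : #|Sface p F| = #|F|.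
Proof.
rewrite -(card_preimset F (@perm_inj _ p)).
by apply: eq_card=> i; rewrite !inE.
Qed.

Lemma is_decomp_pull (W : nat -> kform R n k -> Prop) (v : kform R n k)
    (w : 'I_n.+1 -> kform R n k) :
  (forall d : 'I_n.+1, Sn_invariant (W d)) -> is_decomp W v w ->
  is_decomp W (pull p v) (fun d => pull p (w d)).
Proof.
move=> W_inv [Ww vw]; split; first by move=> d; apply: W_inv.
exact: eqT_pull vw.
Qed.

End Permutations.

Section Decomposition.
Variables (R : realType) (n k : nat).
Variables (V : kform R n k -> Prop) (W : nat -> kform R n k -> Prop).
Hypothesis W_subspace : forall d : 'I_n.+1, kf_subspace (W d).
Hypothesis V_dsum : forall d : 'I_n.+1, dsum_decomp V W d.

Lemma dsum_decomp_eq0 (z : 'I_n.+1 -> kform R n k) :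
  (forall d : 'I_n.+1, W d (z d)) -> eqT (form_sum z) (@form0 R n k) ->
  forall d, eqT (z d) (@form0 R n k).
Proof.
move=> Wz sum0; suff zlt0 m (d : 'I_n.+1) : (d < m)%N -> eqT (z d) (@form0 R n k).
  by move=> d; apply: (zlt0 d.+1).
elim: m d => [//|m IH] d; rewrite ltnS leq_eqVlt => /predU1P [def_m | /IH //].
have [W_Vsub [W_cap _]] := V_dsum d.
apply: W_cap (Wz d) _; split=> [|G card_G]; first exact: (W_Vsub _ (Wz d)).1.
apply: eqF_sum_component (eqT_eqF sum0) _ => j ne_jd.
have [lt_jd | le_dj] := ltnP j d; first by apply/eqT_eqF/IH; rewrite -def_m.
have [_ z_j0] := (V_dsum j).1 _ (Wz j).
apply: eqF_card_le z_j0 _ _; first exact: ltnW.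
by rewrite card_G ltn_neqAle le_dj andbT; apply: contra ne_jd => /eqP/val_inj->.
Qed.

Lemma is_decomp_uniq (v : kform R n k) (w w' : 'I_n.+1 -> kform R n k) :
  is_decomp W v w -> is_decomp W v w' -> forall d, eqT (w d) (w' d).
Proof.
move=> [Ww vw] [Ww' vw'] d.
pose z j := form_add (form_scale (-1) (w' j)) (w j).
have Wz (j : 'I_n.+1) : W j (z j) by have [_ [_ [W_lin _]]] := W_subspace j; apply: W_lin.
have sum0 : eqT (form_sum z) (@form0 R n k).
  move=> x vs Tx Tvs; have := vw x vs Tx Tvs; have := vw' x vs Tx Tvs.
  rewrite /form_sum /z /form_add /form_scale big_split /= -big_distrr /=.
  by move=> <- <-; rewrite mulN1r addNr.
move=> x vs Tx Tvs; have := dsum_decomp_eq0 Wz sum0 d Tx Tvs.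
by rewrite /z /form_add /form_scale mulN1r addrC => /eqP; rewrite subr_eq0 => /eqP.
Qed.

End Decomposition.

Theorem proposition3p13 (R : realType) (n k : nat)
  (V : kform R n k -> Prop) (W : nat -> kform R n k -> Prop) :
  kf_subspace V -> kf_findim V -> Sn_invariant V ->
  (forall d, (d <= n)%N -> kf_subspace (W d)) ->
  (forall d, (d <= n)%N -> Sn_invariant (W d)) ->
  (forall d, (d <= n)%N -> dsum_decomp V W d) ->
  forall (p : 'S_n.+1) (v : kform R n k) (w w' : 'I_n.+1 -> kform R n k),
    V v -> is_decomp W v w -> is_decomp W (pull p v) w' ->
    forall F : {set 'I_n.+1}, F != set0 ->
      eqF F (Dfam w' F) (act_fam p (Dfam w) F).
Proof.
move=> _ _ _ W_subspace W_inv V_dsum p v w w' _ vw pvw' F _.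
have le_ord_n (d : 'I_n.+1) : (d <= n)%N := ltnSE (ltn_ord d).
have w'_pull_w := is_decomp_uniq (fun d => W_subspace d (le_ord_n d))
  (fun d => V_dsum d (le_ord_n d)) pvw'
  (is_decomp_pull p (fun d => W_inv d (le_ord_n d)) vw).
rewrite /Dfam /act_fam /fdim card_Sface.
exact: eqT_eqF (w'_pull_w _).
Qed.
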